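(* Let $G$ and the Kuramoto model be as in the context, and assume moreover that no edge of $G$ joins two vertices that both have degree at least $3$. Then the number $\mathcal{N}$ of distinct stable fixed points satisfies $$\mathcal{N}\le\prod_{k=1}^c\left[2\cdot\lfloor n_k/4\rfloor+1\right].$$
   Context: Let $G$ be a finite connected planar graph with vertices $1,\dots,n$ and $m$ edges, such that every edge of $G$ lies on at least one cycle of $G$, and fix a planar embedding of $G$. Let $F_1,\dots,F_c$ ($c=m-n+1$) be the bounded faces of the embedding, and let $n_k$ be the number of edges on the boundary of $F_k$. Fix $K>0$ and consider the Kuramoto model $\dot\theta_i=-K\sum_{j\sim i}\sin(\theta_i-\theta_j)$, $i=1,\dots,n$ ($j\sim i$ means $j$ is adjacent to $i$). A fixed point is $\theta\in\mathbb{R}^n$ with $\sum_{j\sim i}\sin(\theta_i-\theta_j)=0$ for all $i$; fixed points are counted up to adding one common constant to all $\theta_i$ and integer multiples of $2\pi$ to individual $\theta_i$. The stability matrix $M$ has entries $M_{ij}=K\cos(\theta_i-\theta_j)$ if $i\sim j$, $M_{ii}=-\sum_{k\sim i}K\cos(\theta_i-\theta_k)$, and $0$ otherwise; a fixed point is stable if $M$ is negative semidefinite. *)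

From HB Require Import structures.
From mathcomp Require Import all_boot all_order all_algebra.
From mathcomp Require Import reals trigo.
Set Implicit Arguments. Unset Strict Implicit. Unset Printing Implicit Defensive.
Import Order.TTheory GRing.Theory Num.Theory.

Definition simple_graph n (e : rel 'I_n) : Prop :=
  (forall u v, e u v = e v u) /\ (forall u, ~~ e u u).

Definition connected_graph n (e : rel 'I_n) : Prop :=
  forall u v, connect e u v.

Definition deg n (e : rel 'I_n) (u : 'I_n) : nat := #|[set v | e u v]|.

Definition edge_on_cycle n (e : rel 'I_n) (u v : 'I_n) : Prop :=
  exists p : seq 'I_n,
    [/\ uniq p, 2 < size p, cycle e p, u \in p & (next p u == v) || (next p v == u)].

Definition every_edge_on_cycle n (e : rel 'I_n) : Prop :=
  forall u v, e u v -> edge_on_cycle e u v.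

Definition darts n (e : rel 'I_n) : {set 'I_n * 'I_n} := [set x | e x.1 x.2].

Definition edges n (e : rel 'I_n) : {set {set 'I_n}} :=
  [set [set x.1; x.2] | x in darts e].

(* rot u is the cyclic successor map on the neighbourhood of u:
   it maps neighbours of u to neighbours of u and the neighbours of u form a
   single orbit of it (hence it is a cyclic permutation of N(u)). *)
Definition rotation_system n (e : rel 'I_n) (rot : 'I_n -> 'I_n -> 'I_n) : Prop :=
  forall u, (forall v, e u v -> e u (rot u v)) /\
            (forall v w, e u v -> e u w -> fconnect (rot u) v w).

Definition face_step n (rot : 'I_n -> 'I_n -> 'I_n) (x : 'I_n * 'I_n) : 'I_n * 'I_n :=
  (x.2, rot x.2 x.1).

(* faces = orbits of the face-tracing permutation on the darts *)
Definition faces n (e : rel 'I_n) (rot : 'I_n -> 'I_n -> 'I_n) : {set {set 'I_n * 'I_n}} :=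
  [set [set y in darts e | fconnect (face_step rot) x y] | x in darts e].

Definition face_size n (F : {set 'I_n * 'I_n}) : nat :=
  #|[set [set x.1; x.2] | x in F]|.

(* the rotation system is a planar embedding (of the connected graph):
   Euler's formula  V - E + F = 2  (the edgeless one-vertex graph is trivially planar,
   its unique face having no darts). *)
Definition planar_rotation n (e : rel 'I_n) (rot : 'I_n -> 'I_n -> 'I_n) : Prop :=
  rotation_system e rot /\
  (#|edges e| = 0%N \/ (n + #|faces e rot| = #|edges e| + 2)%N).

Local Open Scope ring_scope.

Definition kuramoto_fixed_point (R : realType) n (e : rel 'I_n) (theta : 'I_n -> R) : Prop :=
  forall i : 'I_n, \sum_(j | e i j) sin (theta i - theta j) = 0.

Definition stability_matrix (R : realType) n (e : rel 'I_n) (K : R) (theta : 'I_n -> R)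
  : 'M[R]_n :=
  \matrix_(i, j) (if i == j then - \sum_(k | e i k) K * cos (theta i - theta k)
                  else if e i j then K * cos (theta i - theta j) else 0).

Definition neg_semidef (R : realType) n (M : 'M[R]_n) : Prop :=
  forall x : 'cV[R]_n, (x^T *m M *m x) 0 0 <= 0.

Definition stable_fixed_point (R : realType) n (e : rel 'I_n) (K : R) (theta : 'I_n -> R)
  : Prop :=
  kuramoto_fixed_point e theta /\ neg_semidef (stability_matrix e K theta).

Definition same_fixed_point (R : realType) n (theta theta' : 'I_n -> R) : Prop :=
  exists (c : R) (k : 'I_n -> int),
    forall i, theta' i = theta i + c + (k i)%:~R * (2 * pi).

(* At a stable fixed point, an edge with an endpoint u of degree at most two has
   cos (theta_u - theta_v) >= 0; otherwise the stability matrix restricted to two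
   coordinates is not negative semidefinite.  So under the degree hypothesis every
   phase difference is represented modulo 2 pi by asin (sin (theta_u - theta_v)),
   which lies in [-pi/2, pi/2]; around a face these sum to 2 pi w_F with
   4 |w_F| <= n_F, leaving 2 floor(n_F / 4) + 1 possible winding numbers.
   If two stable fixed points have the same winding numbers on all bounded faces,
   the difference of their edge angles sums to zero around every bounded face, so by
   Euler's formula it is a gradient phi_u - phi_v.  Pairing the fixed-point
   equations with phi gives sum (sin a - sin a') (a - a') = 0, and since sin is
   increasing on [-pi/2, pi/2] the edge angles agree, hence so do the fixed points. *)

From HB Require Import structures.
From mathcomp Require Import all_boot all_order all_algebra.
From mathcomp Require Import reals trigo.
From mathcomp Require Import zify ring lra.

Set Implicit Arguments.
Unset Strict Implicit.
Unset Printing Implicit Defensive.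

Import Order.TTheory GRing.Theory Num.Theory.

Lemma card_le_prod_box (A I : finType) (S : {pred I}) (b : I -> nat) (w : A -> I -> int) :
  (forall a1 a2, {in S, w a1 =1 w a2} -> a1 = a2) ->
  (forall a i, i \in S -> `|w a i|%N <= b i) ->
  #|A| <= \prod_(i in S) (2 * b i + 1).
Proof.
move=> w_inj w_bound; pose c i := (if i \in S then 2 * b i else 0).+1.
pose code a : {dffun forall i, 'I_(c i)} :=
  [ffun i => inord (if i \in S then `|(w a i + (b i)%:Z)%R|%N else 0)].
have code_val a i : i \in S -> code a i = `|(w a i + (b i)%:Z)%R|%N :> nat.
  move=> iS; rewrite ffunE /c iS inordK // ltnS; have := w_bound a i iS; lia.
have /leq_card : injective code.
  move=> a1 a2 /ffunP code12; apply: w_inj => i iS; move/(congr1 (@nat_of_ord _)): (code12 i).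
  by rewrite !code_val //; have := w_bound a1 i iS; have := w_bound a2 i iS; lia.
rewrite card_dep_ffun foldrE big_image /= => /leq_trans; apply.
rewrite [X in _ <= X]big_mkcond /=; apply/eq_leq/eq_bigr => i _.
by rewrite card_ord /c; case: (i \in S); rewrite ?addn1.
Qed.

Local Open Scope ring_scope.

Section Trigonometry.
Variable R : realType.
Implicit Types (a b p q t y : R) (k : int).

Lemma periodicz (f : R -> R) T : periodic f T -> forall k a, f (a + k%:~R * T) = f a.
Proof.
move=> fT [] m a; rewrite mulrzl; first exact: periodicn.
by rewrite -[in RHS](subrK (T *+ m.+1) a) NegzE mulrNz periodicn.
Qed.

Lemma cos2pi_periodic : periodic (@cos R) (2 * pi).
Proof. by rewrite mulr_natl; exact: cosD2pi. Qed.

Lemma cos_eq1 t : cos t = 1 -> exists k, t = k%:~R * (2 * pi).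
Proof.
move=> ct1; have pi_gt0 : 0 < pi :> R := pi_gt0 R.
pose k := Num.floor (t / (2 * pi)); exists k.
have k_le : k%:~R * (2 * pi) <= t by rewrite -ler_pdivlMr ?floor_le ?mulr_gt0.
have k_gt : t < (k + 1)%:~R * (2 * pi) by rewrite -ltr_pdivrMr ?floorD1_gt ?mulr_gt0.
rewrite intrD mulrDl mul1r in k_gt.
pose r := t - k%:~R * (2 * pi).
have cr1 : cos r = 1 by rewrite /r -mulNr -intrN (periodicz cos2pi_periodic).
have cr1' : cos (2 * pi - r) = 1.
  by rewrite addrC -[2 * pi]mul1r -[1]/(1%:~R) (periodicz cos2pi_periodic) cosN.
suff r0 : r = 0 by apply/eqP; rewrite -subr_eq0 -/r r0.
have cos_inj0 y : 0 <= y <= pi -> cos y = 1 -> y = 0.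
  move=> y0pi cy1; apply: cos_inj; rewrite ?in_itv /= ?lexx ?pi_ge0 ?cos0 //.
have r_ge0 : 0 <= r by rewrite subr_ge0.
have r_lt : r < 2 * pi by rewrite ltrBlDl.
have [r_le | r_gt] := lerP r pi; first by apply: cos_inj0 => //; apply/andP; split.
suff : 2 * pi - r = 0 by lra.
by apply: cos_inj0 => //; apply/andP; split; lra.
Qed.

Lemma sin_cos_eq_mod2pi a b : sin a = sin b -> cos a = cos b ->
  exists k, a = b + k%:~R * (2 * pi).
Proof.
move=> sab cab; have [k hk] : exists k, a - b = k%:~R * (2 * pi).
  by apply: cos_eq1; rewrite cosB -cab -sab -!expr2 cos2Dsin2.
by exists k; rewrite -hk; ring.
Qed.

Lemma sin_leif_mono p q :
  - (pi / 2) <= p <= pi / 2 -> - (pi / 2) <= q <= pi / 2 ->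
  0 <= (sin p - sin q) * (p - q) ?= iff (p == q).
Proof.
move=> hp hq.
have pI : p \in `[(- (pi / 2)), pi / 2] by rewrite in_itv.
have qI : q \in `[(- (pi / 2)), pi / 2] by rewrite in_itv.
split.
  have [pq | pq | ->] := ltgtP p q; last by rewrite !subrr mulr0.
  - by rewrite mulrC nmulr_rge0 ?subr_lt0 // subr_le0 ltW // ltr_sin.
  - by rewrite mulrC pmulr_rge0 ?subr_gt0 // subr_ge0 ltW // ltr_sin.
apply/idP/idP => [|/eqP ->]; last by rewrite !subrr mulr0.
rewrite eq_sym mulf_eq0 !subr_eq0 => /orP [/eqP spq | //].
by apply/eqP; apply: sin_inj.
Qed.

Definition centered_angle y := asin (sin y).

Lemma sin_in11 y : -1 <= sin y <= 1.
Proof. by rewrite sin_geN1 sin_le1. Qed.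

Lemma centered_angle_ge y : - (pi / 2) <= centered_angle y.
Proof. exact/asin_geNpi2/sin_in11. Qed.

Lemma centered_angle_le y : centered_angle y <= pi / 2.
Proof. exact/asin_lepi2/sin_in11. Qed.

Lemma sin_centered_angle y : sin (centered_angle y) = sin y.
Proof. by rewrite /centered_angle asinK // in_itv /= sin_in11. Qed.

Lemma centered_angleN y : centered_angle (- y) = - centered_angle y.
Proof.
rewrite /centered_angle sinN -{1}(sin_centered_angle y) -sinN sinK // in_itv /=.
by rewrite lerNl opprK lerNl andbC centered_angle_le centered_angle_ge.
Qed.

Lemma cos_centered_angle y : 0 <= cos y -> cos (centered_angle y) = cos y.
Proof.
move=> cy_ge0; rewrite /centered_angle cos_asin ?sin_in11 // -cos2sin2.
by rewrite sqrtr_sqr ger0_norm.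
Qed.

Lemma centered_angle_mod2pi y : 0 <= cos y ->
  exists k, y = centered_angle y + k%:~R * (2 * pi).
Proof.
by move=> cy_ge0; apply: sin_cos_eq_mod2pi; rewrite ?sin_centered_angle ?cos_centered_angle.
Qed.

End Trigonometry.

Section NegSemidef.
Variables (R : realType) (n : nat) (M : 'M[R]_n).
Hypothesis M_nsd : neg_semidef M.

Lemma qform_delta2 (u v : 'I_n) (a b : R) :
  let x : 'cV[R]_n := a *: delta_mx u 0 + b *: delta_mx v 0 in
  (x^T *m M *m x) 0 0 = a * a * M u u + a * b * (M u v + M v u) + b * b * M v v.
Proof.
have qd i j : (delta_mx i 0 : 'cV[R]_n)^T *m M *m delta_mx j 0 = (M i j)%:M.
  by apply/matrixP => ? ?; rewrite !ord1 trmx_delta -rowE -colE !mxE.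
rewrite /= [(_ + _)^T]linearD /= ![(_ *: _)^T]linearZ /= !mulmxDl !mulmxDr.
by rewrite -!scalemxAl -!scalemxAr !qd !mxE eqxx !mulr1n; ring.
Qed.

Lemma neg_semidef_diag u : M u u <= 0.
Proof. by have := M_nsd (1 *: delta_mx u 0 + 0 *: delta_mx u 0); rewrite qform_delta2; lra. Qed.

Lemma neg_semidef_diag0 u v : M u u = 0 -> M u v + M v u = 0.
Proof.
move=> Muu0; apply/eqP; apply: contraT => s_neq0.
pose t := (`|M v v| + 1) / (M u v + M v u).
have := M_nsd (t *: delta_mx u 0 + 1 *: delta_mx v 0).
rewrite qform_delta2 Muu0 mulr1 divfK // mul1r.
have := ler_norm (- M v v); rewrite normrN; lra.
Qed.

End NegSemidef.

Section Stability.
Variables (R : realType) (n : nat) (e : rel 'I_n) (K : R) (theta : 'I_n -> R).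
Hypotheses (K_gt0 : 0 < K) (e_simple : simple_graph e).
Hypothesis theta_stable : stable_fixed_point e K theta.

Local Notation M := (stability_matrix e K theta).
Local Notation c u v := (cos (theta u - theta v)).
Local Notation s u v := (sin (theta u - theta v)).

Lemma stability_matrix_diag u : M u u = - \sum_(k | e u k) K * c u k.
Proof. by rewrite mxE eqxx. Qed.

Lemma stability_matrix_edge u v : e u v -> M u v = K * c u v.
Proof.
move=> euv; have uv : u != v by apply: contraTneq euv => ->; exact: e_simple.2.
by rewrite mxE (negbTE uv) euv.
Qed.

Lemma stable_cos_ge0 u v : e u v -> (deg e u < 3)%N -> 0 <= c u v.
Proof.
move=> euv deg_u; rewrite leNgt; apply/negP => cuv_lt0.
have evu : e v u by rewrite e_simple.1.
have Kcuv_lt0 : K * c u v < 0 by rewrite pmulr_rlt0.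
have [fixed nsd] := theta_stable.
have Mdiag_le0 := neg_semidef_diag nsd u.
pose N := [set w | e u w & w != v].
have sumD1 F : \sum_(k | e u k) F k = F v + \sum_(k in N) F k :> R.
  by rewrite (bigD1 v) //=; congr (_ + _); apply: eq_bigl => k; rewrite inE.
have : (#|N| <= 1)%N.
  move: deg_u; rewrite /deg (cardsD1 v) inE euv.
  by rewrite (eq_card (B := N)) // => w; rewrite !inE andbC.
(* With a second neighbour w, the fixed-point equation at u forces
   cos (theta u - theta w) = - cos (theta u - theta v), so M u u = 0. *)
rewrite leq_eqVlt ltnS leqn0 => /orP [/cards1P [w Nw] | /eqP/cards0_eq N0].
- have := fixed u; rewrite sumD1 Nw big_set1 => sin_sum0.
  rewrite stability_matrix_diag sumD1 Nw big_set1 in Mdiag_le0.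
  have : 0 < K * c u w by lra.
  rewrite pmulr_rgt0 // => cuw_pos.
  have cuw_sq : c u w ^+ 2 = c u v ^+ 2.
    by rewrite !cos2sin2 (_ : s u w = - s u v) ?sqrrN //; lra.
  have cuw : c u w = - c u v by nra.
  have Muu0 : M u u = 0 by rewrite stability_matrix_diag sumD1 Nw big_set1 cuw; ring.
  have := neg_semidef_diag0 nsd v Muu0.
  rewrite !stability_matrix_edge // -[theta v - _]opprB cosN; lra.
- rewrite stability_matrix_diag sumD1 N0 big_set0 in Mdiag_le0; lra.
Qed.

End Stability.

Lemma connect_ind (T : finType) (e : rel T) (P : T -> Prop) a b :
  connect e a b -> P a -> (forall u v, e u v -> P u -> P v) -> P b.
Proof.
move=> /connectP [p + ->] Pa step; elim: p a Pa => [|c p IH] a //= Pa /andP [eac].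
exact/IH/(step _ _ eac).
Qed.

Lemma set2_pair_eq (T : finType) (x y : T * T) :
  [set x.1; x.2] = [set y.1; y.2] -> x = y \/ x = swap_pair y.
Proof.
case: x y => [a b] [c d] /= eq_ab_cd.
have : a \in [set c; d] by rewrite -eq_ab_cd set21.
have : b \in [set c; d] by rewrite -eq_ab_cd set22.
have : c \in [set a; b] by rewrite eq_ab_cd set21.
have : d \in [set a; b] by rewrite eq_ab_cd set22.
by rewrite !inE => /orP [] /eqP dE /orP [] /eqP cE /orP [] /eqP bE /orP [] /eqP aE; subst; auto.
Qed.

Section Faces.
Variables (n : nat) (e : rel 'I_n) (rot : 'I_n -> 'I_n -> 'I_n).
Hypotheses (e_simple : simple_graph e) (rot_system : rotation_system e rot).

Local Notation D := (darts e).
Local Notation fstep := (face_step rot).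

Lemma in_darts x : (x \in D) = e x.1 x.2.
Proof. by rewrite inE. Qed.

Lemma darts_neq x : x \in D -> x.1 != x.2.
Proof. by rewrite in_darts; apply: contraTneq => ->; exact: e_simple.2. Qed.

Lemma swap_darts x : (swap_pair x \in D) = (x \in D).
Proof. by rewrite !in_darts e_simple.1. Qed.

Lemma face_step_darts : {homo fstep : x / x \in D}.
Proof. by move=> [u v]; rewrite !in_darts /= e_simple.1; apply: (rot_system v).1. Qed.

Lemma rot_nbr_inj v : {in [pred w | e v w] &, injective (rot v)}.
Proof.
pose S := [set w | e v w].
have rotS w : w \in S -> rot v w \in S by rewrite !inE; apply: (rot_system v).1.
have rotS_onto : S \subset rot v @: S.
  apply/subsetP => w wS; have /iter_findex iter_w : fconnect (rot v) (rot v w) w.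
    by move: (rotS w wS) (wS); rewrite !inE; apply: (rot_system v).2.
  have iter_in j : iter j (rot v) w \in S by elim: j => //= j; apply: rotS.
  apply/imsetP; exists (iter (findex (rot v) (rot v w) w) (rot v) w) => //.
  by rewrite -iterS iterSr iter_w.
have /imset_injP rot_inj : #|rot v @: S| == #|S|.
  rewrite eqn_leq (subset_leq_card rotS_onto) andbT subset_leq_card //.
  by apply/subsetP => _ /imsetP [w /rotS wS ->].
by move=> a b ha hb; apply: rot_inj; rewrite inE.
Qed.

Lemma face_step_inj : {in D &, injective fstep}.
Proof.
move=> [a b] [c d]; rewrite !in_darts /= => eab ecd [bd rot_eq]; subst d; congr (_, _).
by apply: rot_nbr_inj rot_eq; rewrite inE /= e_simple.1.
Qed.

Definition face_of x := [set y in D | fconnect fstep x y].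

Lemma face_of_faces x : x \in D -> face_of x \in faces e rot.
Proof. exact: imset_f. Qed.

Lemma mem_face_of x : x \in D -> x \in face_of x.
Proof. by move=> xD; rewrite inE xD connect0. Qed.

Lemma face_of_eq x y : x \in D -> y \in face_of x -> face_of y = face_of x.
Proof.
move=> xD; rewrite inE => /andP [yD cxy]; apply/setP => z; rewrite !inE.
case: (e z.1 z.2) => //=; apply/idP/idP => [|cxz]; first exact: connect_trans cxy.
by apply: connect_trans cxz; rewrite (fconnect_sym_in face_step_darts face_step_inj).
Qed.

Lemma faces_sub_darts F : F \in faces e rot -> F \subset D.
Proof. by case/imsetP => x _ ->; apply/subsetP => y; rewrite inE => /andP []. Qed.

Lemma mem_faces F x : F \in faces e rot -> x \in D -> (x \in F) = (F == face_of x).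
Proof.
case/imsetP => x0 x0D -> xD; apply/idP/eqP => [x_in | ->]; last exact: mem_face_of.
by rewrite (face_of_eq x0D x_in).
Qed.

Lemma face_of_step x : x \in D -> face_of (fstep x) = face_of x.
Proof. by move=> xD; rewrite (face_of_eq xD) // inE face_step_darts // fconnect1. Qed.

Lemma face_step_face F : F \in faces e rot -> fstep @: F = F.
Proof.
move=> FF; have FD := subsetP (faces_sub_darts FF).
apply/eqP; rewrite eqEcard card_in_imset ?leqnn ?andbT; last first.
  by move=> x y /FD xD /FD yD; apply: face_step_inj.
apply/subsetP => _ /imsetP [x xF ->]; have xD := FD x xF.
by rewrite (mem_faces FF (face_step_darts xD)) face_of_step // -mem_faces.
Qed.

Lemma sum_face_telescope (V : zmodType) F (phi : 'I_n -> V) : F \in faces e rot ->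
  \sum_(x in F) (phi x.1 - phi x.2) = 0.
Proof.
move=> FF; rewrite sumrB [X in _ - X](_ : _ = \sum_(x in fstep @: F) phi x.1).
  by rewrite face_step_face // subrr.
rewrite big_imset //= => x y /(subsetP (faces_sub_darts FF)) xD /(subsetP (faces_sub_darts FF)).
exact: face_step_inj.
Qed.

Lemma face_fun_const (Z : Type) (c : {set 'I_n * 'I_n} -> Z) :
  connected_graph e ->
  (forall x, x \in D -> c (face_of x) = c (face_of (swap_pair x))) ->
  {in D &, forall x y, c (face_of x) = c (face_of y)}.
Proof.
move=> e_conn c_swap.
have c_rot u v : e u v -> c (face_of (u, v)) = c (face_of (u, rot u v)).
  move=> euv; have vuD : (v, u) \in D by rewrite in_darts e_simple.1.
  by rewrite c_swap ?in_darts // -(face_of_step vuD).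
have c_nbr u v w : e u v -> e u w -> c (face_of (u, v)) = c (face_of (u, w)).
  move=> euv euw; have /iter_findex <- := (rot_system u).2 v w euv euw.
  elim: (findex _ _ _) => //= k ->; apply: c_rot.
  by elim: k => //= k; apply: (rot_system u).1.
move=> [a b] [a' b']; rewrite !in_darts /= => eab eab'.
pose P u := forall v, e u v -> c (face_of (u, v)) = c (face_of (a, b)).
suff Pa' : P a' by rewrite Pa'.
apply: (connect_ind (e_conn a a')) => [v eav | u v euv Pu w evw]; first exact: c_nbr.
have evu : e v u by rewrite e_simple.1.
by rewrite (c_nbr _ _ _ evw evu) (c_swap (v, u)) ?in_darts //; apply: Pu.
Qed.

Definition pdarts := [set x in D | (x.1 < x.2)%N].

Lemma pdarts_darts x : x \in pdarts -> x \in D.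
Proof. by rewrite inE => /andP []. Qed.

Lemma darts_pdarts x : x \in D -> x \in pdarts \/ swap_pair x \in pdarts.
Proof.
move=> xD; have := xD; rewrite in_darts => exy; rewrite !inE /= exy e_simple.1 exy /=.
by have := darts_neq xD; rewrite -val_eqE /= neq_ltn => /orP []; auto.
Qed.

Lemma sum_darts_pdarts (V : zmodType) (G : 'I_n * 'I_n -> V) :
  \sum_(x in D) G x = \sum_(x in pdarts) (G x + G (swap_pair x)).
Proof.
rewrite big_split /= (bigID (fun x : 'I_n * 'I_n => (x.1 < x.2)%N)) /=.
congr (_ + _); first by apply: eq_bigl => x; rewrite [in RHS]inE.
rewrite (reindex_inj (can_inj swap_pairK)) /=; apply: eq_bigl => x.
rewrite swap_darts !inE /=; case exy: (e x.1 x.2) => //=.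
by have := @darts_neq x; rewrite in_darts exy -val_eqE /= => /(_ isT); lia.
Qed.

Lemma card_edges : #|edges e| = #|pdarts|.
Proof.
have -> : edges e = [set [set x.1; x.2] | x in pdarts].
  apply/setP => E; apply/imsetP/imsetP => [[x xD ->] | [x /pdarts_darts xD ->]]; last first.
    by exists x.
  case: (darts_pdarts xD) => [xP | sP]; first by exists x.
  by exists (swap_pair x) => //=; rewrite setUC.
rewrite card_in_imset // => x y; rewrite !inE => /andP [_ xlt] /andP [_ ylt].
case/set2_pair_eq => // x_swap; move: xlt.
by rewrite x_swap /= => /(ltn_trans ylt); rewrite ltnn.
Qed.

End Faces.

Lemma kermx_sub_rank (F : fieldType) n m p (B : 'M[F]_(n, m)) (C : 'M[F]_(m, p)) :
  B *m C = 0 -> (m <= \rank B + \rank C)%N -> (kermx C <= B)%MS.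
Proof.
move=> BC0 rank_le; have B_sub : (B <= kermx C)%MS by apply/sub_kermxP.
have [_ <-] := mxrank_leqif_sup B_sub; have := mxrankS B_sub.
by rewrite mxrank_ker; have := rank_leq_row C; lia.
Qed.

Lemma mxrank_kermx_le (F : fieldType) m p (A : 'M[F]_(m, p)) (r0 : 'rV_m) :
  (forall r, r *m A = 0 -> exists a, r = a *: r0) -> (\rank (kermx A) <= \rank r0)%N.
Proof.
move=> ker_r0; apply/mxrankS/row_subP => i.
have /ker_r0 [a ->] : row i (kermx A) *m A = 0 by rewrite -row_mul mulmx_ker row0.
exact: scalemx_sub.
Qed.

Section CycleSpace.
Variables (R : fieldType) (n : nat) (e : rel 'I_n) (rot : 'I_n -> 'I_n -> 'I_n).
Variable outer : {set 'I_n * 'I_n}.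
Hypotheses (n_gt0 : (0 < n)%N) (e_simple : simple_graph e) (e_conn : connected_graph e).
Hypotheses (rot_system : rotation_system e rot)
  (euler : #|edges e| = 0%N \/ (n + #|faces e rot| = #|edges e| + 2)%N).
Hypothesis outer_face : outer \in faces e rot \/ faces e rot = set0.

Local Notation D := (darts e).
Local Notation P := (pdarts e).

Definition inner_faces := [set F in faces e rot | F != outer].

Definition pdart (j : 'I_#|P|) := enum_val j.
Definition inner_face (k : 'I_#|inner_faces|) := enum_val k.

Definition incidence_mx : 'M[R]_(n, #|P|) :=
  \matrix_(u, j) ((u == (pdart j).1)%:R - (u == (pdart j).2)%:R).

Definition boundary_mx : 'M[R]_(#|P|, #|inner_faces|) :=
  \matrix_(j, k) ((pdart j \in inner_face k)%:R - (swap_pair (pdart j) \in inner_face k)%:R).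

Lemma pdart_darts j : pdart j \in D.
Proof. exact/pdarts_darts/enum_valP. Qed.

Lemma inner_face_faces k : inner_face k \in faces e rot.
Proof. by have := enum_valP k; rewrite inE => /andP []. Qed.

Lemma inner_face_outer k : inner_face k != outer.
Proof. by have := enum_valP k; rewrite inE => /andP []. Qed.

Lemma darts_pdart x : x \in D -> exists j, pdart j = x \/ pdart j = swap_pair x.
Proof.
case/(darts_pdarts e_simple) => [xP | sP].
  by exists (enum_rank_in xP x); left; rewrite /pdart enum_rankK_in.
by exists (enum_rank_in sP (swap_pair x)); right; rewrite /pdart enum_rankK_in.
Qed.

Lemma sum_pdart_face (h : 'I_n * 'I_n -> R) F :
  {in D, forall x, h (swap_pair x) = - h x} -> F \in faces e rot ->
  \sum_j h (pdart j) * ((pdart j \in F)%:R - (swap_pair (pdart j) \in F)%:R) =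
  \sum_(x in F) h x.
Proof.
move=> h_anti FF; have FD := subsetP (faces_sub_darts FF).
pose hF x := h x * ((x \in F)%:R - (swap_pair x \in F)%:R).
rewrite -(big_enum_val (A := mem P) hF) /=.
have -> : \sum_(x in F) h x = \sum_(x in D) (if x \in F then h x else 0).
  rewrite -big_mkcondr; apply: eq_bigl => x.
  by case: (boolP (x \in F)) => [/FD|]; rewrite ?andbF ?andbT.
rewrite (sum_darts_pdarts e_simple); apply: eq_bigr => x /(pdarts_darts (x := x)) xD.
by rewrite /hF h_anti //; case: (x \in F); case: (swap_pair x \in F); rewrite /=; ring.
Qed.

Lemma mul_incidence_mx (p : 'rV[R]_n) j :
  (p *m incidence_mx) 0 j = p 0 (pdart j).1 - p 0 (pdart j).2.
Proof.
have pick a : \sum_u p 0 u * (u == a)%:R = p 0 a.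
  by rewrite (bigD1 a) //= eqxx mulr1 big1 ?addr0 // => u /negbTE ->; rewrite mulr0.
by rewrite !mxE; under eq_bigr do rewrite !mxE mulrBr; rewrite sumrB !pick.
Qed.

Lemma incidence_boundary_mx0 : incidence_mx *m boundary_mx = 0.
Proof.
apply/matrixP => u k; rewrite !mxE; under eq_bigr do rewrite !mxE.
rewrite (sum_pdart_face (h := fun x => (u == x.1)%:R - (u == x.2)%:R)) ?inner_face_faces //.
  exact: (sum_face_telescope e_simple rot_system (fun v => (u == v)%:R : R)
    (inner_face_faces k)).
by move=> x _ /=; rewrite opprB.
Qed.

Lemma rank_incidence_mx : (n <= \rank incidence_mx + 1)%N.
Proof.
pose one : 'rV[R]_n := const_mx 1.
suff : (\rank (kermx incidence_mx) <= \rank one)%N.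
  by rewrite mxrank_ker; have := rank_leq_row one; lia.
apply: mxrank_kermx_le => r rB0; pose u0 := Ordinal n_gt0.
have r_edge u v : e u v -> r 0 u = r 0 v.
  move=> euv; have uvD : (u, v) \in D by rewrite in_darts.
  have [j jE] := darts_pdart uvD; have := mul_incidence_mx r j.
  rewrite rB0 mxE => /esym/eqP; rewrite subr_eq0 => /eqP.
  by case: jE => -> /= ->.
exists (r 0 u0); apply/rowP => u; rewrite !mxE mulr1.
by apply: (connect_ind (e_conn u0 u) (P := fun v => r 0 v = r 0 u0)) => // a b /r_edge ->.
Qed.

Lemma rank_boundary_mx : (#|inner_faces| <= \rank boundary_mx)%N.
Proof.
pose zero : 'rV[R]_#|inner_faces| := 0.
suff : (\rank (kermx boundary_mx^T) <= \rank zero)%N.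
  by rewrite mxrank_ker mxrank0 mxrank_tr; lia.
apply: mxrank_kermx_le => r rC0; exists 0; rewrite scale0r.
pose ct F := \sum_k r 0 k * (inner_face k == F)%:R.
pose s y := \sum_k r 0 k * ((y \in inner_face k)%:R - (swap_pair y \in inner_face k)%:R).
have s_pdart j : s (pdart j) = 0.
  by move/matrixP/(_ 0 j): rC0; rewrite !mxE; under eq_bigr do rewrite !mxE.
have s_swap y : s (swap_pair y) = - s y.
  by rewrite /s -sumrN; apply: eq_bigr => k _; rewrite swap_pairK -mulrN opprB.
have s0 y : y \in D -> s y = 0.
  case/darts_pdart => j [<- // | /(congr1 swap_pair)]; rewrite swap_pairK => <-.
  by rewrite s_swap s_pdart oppr0.
have ct_swap x : x \in D -> ct (face_of e rot x) = ct (face_of e rot (swap_pair x)).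
  move=> xD; apply/eqP; rewrite -subr_eq0 -sumrB -[X in _ == X](s0 x xD).
  apply/eqP/eq_bigr => k _.
  by rewrite -mulrBr !(mem_faces e_simple rot_system (inner_face_faces k)) ?swap_darts.
have ct_outer : ct outer = 0.
  by rewrite /ct big1 // => k _; rewrite (negbTE (inner_face_outer k)) mulr0.
have ct_inner k : ct (inner_face k) = r 0 k.
  rewrite /ct (bigD1 k) //= eqxx mulr1 big1 ?addr0 // => k' k'k.
  by rewrite (inj_eq enum_val_inj) (negbTE k'k) mulr0.
apply/rowP => k; rewrite mxE -ct_inner.
have kF := inner_face_faces k.
have : outer \in faces e rot by case: outer_face => // faces0; rewrite faces0 inE in kF.
case/imsetP: kF => x1 x1D ->; case/imsetP => x0 x0D outerE.
by rewrite -ct_outer outerE; apply: (face_fun_const e_simple rot_system e_conn ct_swap).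
Qed.

Lemma card_pdarts_le : (#|P| + 1 <= n + #|inner_faces|)%N.
Proof.
rewrite -(card_edges e_simple); case: euler => [-> | euler_eq]; first lia.
case: outer_face => [outerF | faces0].
  have : #|inner_faces| = (#|faces e rot| - 1)%N.
    have -> : inner_faces = faces e rot :\ outer by apply/setP => F; rewrite !inE andbC.
    by rewrite [#|faces e rot|](cardsD1 outer) outerF add1n subn1.
  lia.
suff : #|edges e| = 0%N by move: euler_eq; rewrite faces0 cards0; lia.
apply/eqP; rewrite cards_eq0; apply/eqP/setP => E; rewrite inE.
by apply/imsetP => -[x /(face_of_faces rot) xF _]; rewrite faces0 inE in xF.
Qed.

Lemma face_sum0_gradient (dl : 'I_n * 'I_n -> R) :
  {in D, forall x, dl (swap_pair x) = - dl x} ->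
  (forall F, F \in inner_faces -> \sum_(x in F) dl x = 0) ->
  exists phi : 'I_n -> R, {in D, forall x, dl x = phi x.1 - phi x.2}.
Proof.
move=> dl_anti dl_faces; pose d := \row_j dl (pdart j).
have dC0 : d *m boundary_mx = 0.
  apply/rowP => k; rewrite !mxE; under eq_bigr do rewrite !mxE.
  by rewrite sum_pdart_face ?inner_face_faces // dl_faces // enum_valP.
(* Euler's formula makes the image of incidence_mx as large as the left kernel of
   boundary_mx. *)
have /submxP [p dE] : (d <= incidence_mx)%MS.
  apply: submx_trans (kermx_sub_rank incidence_boundary_mx0 _); first exact/sub_kermxP.
  by have := rank_incidence_mx; have := rank_boundary_mx; have := card_pdarts_le; lia.
have dl_pdart j : dl (pdart j) = p 0 (pdart j).1 - p 0 (pdart j).2.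
  by rewrite -mul_incidence_mx -dE mxE.
exists (fun u => p 0 u) => x /darts_pdart [j [<- // | jE]].
by rewrite -[x]swap_pairK -jE dl_anti ?pdart_darts // dl_pdart opprB.
Qed.

End CycleSpace.

Lemma sum_mod2pi (R : realType) (T : finType) (A : {pred T}) (a b : T -> R) :
  {in A, forall x, exists k : int, a x = b x + k%:~R * (2 * pi)} ->
  exists k : int, \sum_(x in A) a x = \sum_(x in A) b x + k%:~R * (2 * pi).
Proof.
move=> ab; apply: (big_rec2 (fun s t => exists k : int, s = t + k%:~R * (2 * pi))).
  by exists 0; rewrite mul0r addr0.
move=> x s t xA [k ->]; have [k' ->] := ab x xA.
by exists (k' + k); rewrite intrD; ring.
Qed.

Section Winding.
Variables (R : realType) (n : nat) (e : rel 'I_n) (rot : 'I_n -> 'I_n -> 'I_n).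
Hypotheses (e_simple : simple_graph e) (rot_system : rotation_system e rot).

Local Notation D := (darts e).

Definition edge_angle (theta : 'I_n -> R) (x : 'I_n * 'I_n) :=
  centered_angle (theta x.1 - theta x.2).

(* The sum is an exact multiple of 2 pi (sum_face_edge_angle): the floor only
   reads off the integer. *)
Definition winding (theta : 'I_n -> R) (F : {set 'I_n * 'I_n}) :=
  Num.floor ((\sum_(x in F) edge_angle theta x) / (2 * pi)).

Variable theta : 'I_n -> R.
Hypothesis theta_cos : {in D, forall x, 0 <= cos (theta x.1 - theta x.2)}.

Lemma edge_angle_swap x : edge_angle theta (swap_pair x) = - edge_angle theta x.
Proof. by rewrite /edge_angle /= -centered_angleN opprB. Qed.

Lemma sum_face_edge_angle F : F \in faces e rot ->
  \sum_(x in F) edge_angle theta x = (winding theta F)%:~R * (2 * pi).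
Proof.
move=> FF; have FD := subsetP (faces_sub_darts FF).
have [k sum_k] : exists k : int, \sum_(x in F) edge_angle theta x = k%:~R * (2 * pi).
  have [k] := sum_mod2pi (fun x xF => centered_angle_mod2pi (theta_cos (FD x xF))).
  rewrite (sum_face_telescope e_simple rot_system theta FF).
  by move=> sum0; exists (- k); rewrite intrN mulNr; lra.
have pi2_neq0 : 2 * pi != 0 :> R by rewrite mulf_neq0 // gt_eqF // pi_gt0.
by rewrite /winding sum_k mulfK // intrKfloor.
Qed.

Lemma abs_sum_face_edge_angle F : F \in faces e rot ->
  `|\sum_(x in F) edge_angle theta x| <= (face_size F)%:R * (pi / 2).
Proof.
move=> FF; have FD := subsetP (faces_sub_darts FF).
rewrite (partition_big_imset (fun x : 'I_n * 'I_n => [set x.1; x.2])) /= /face_size.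
rewrite -sum1_card natr_sum mulr_suml; apply: le_trans (ler_norm_sum _ _ _) _.
apply: ler_sum => _ /imsetP [x0 x0F ->]; rewrite mul1r (bigD1 x0) ?x0F ?eqxx //=.
have x0D := FD x0 x0F; have x0_neq : x0 != swap_pair x0.
  by apply: contraTneq (darts_neq e_simple x0D) => {1}-> /=; rewrite eqxx.
have same_edge x : (x \in F) && ([set x.1; x.2] == [set x0.1; x0.2]) && (x != x0) =
    (x \in F) && (x == swap_pair x0).
  apply/idP/idP => [/andP [/andP [-> /eqP /set2_pair_eq []]] | /andP [-> /eqP ->]].
  - by move=> ->; rewrite eqxx.
  - by move=> -> _; rewrite eqxx.
  by rewrite /= setUC eqxx (eq_sym (swap_pair x0)) x0_neq.
rewrite (eq_bigl _ _ same_edge).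
have [sF | sF] := boolP (swap_pair x0 \in F).
  rewrite (big_pred1 (swap_pair x0)) => [|x]; last by rewrite andb_idl // => /eqP ->.
  by rewrite edge_angle_swap subrr normr0 divr_ge0 ?pi_ge0.
rewrite big_pred0 => [|x]; last by apply: contraNF sF => /andP [xF /eqP <-].
by rewrite addr0 ler_norml centered_angle_ge centered_angle_le.
Qed.

Lemma winding_bound F : F \in faces e rot -> (4 * `|winding theta F| <= face_size F)%N.
Proof.
move=> FF; have := abs_sum_face_edge_angle FF; rewrite sum_face_edge_angle //.
rewrite normrM -intr_norm -natr_absz ger0_norm ?mulr_ge0 ?pi_ge0 //.
rewrite [2 * pi](_ : _ = 4 * (pi / 2)); last by field.
by rewrite [_ * (4 * _)]mulrA ler_pM2r ?divr_gt0 ?pi_gt0 // -natrM ler_nat mulnC.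
Qed.

End Winding.

Section FixedPoints.
Variables (R : realType) (n : nat) (e : rel 'I_n).
Hypothesis e_simple : simple_graph e.

Local Notation D := (darts e).

Lemma sum_darts_nbr (V : zmodType) (f : 'I_n * 'I_n -> V) :
  \sum_(x in D) f x = \sum_u \sum_(v | e u v) f (u, v).
Proof. by rewrite pair_big_dep; apply: eq_big => [[u v]|[u v]]; rewrite ?in_darts. Qed.

Lemma kuramoto_fixed_point_orth (theta phi : 'I_n -> R) : kuramoto_fixed_point e theta ->
  \sum_(x in D) sin (theta x.1 - theta x.2) * (phi x.1 - phi x.2) = 0.
Proof.
move=> fixed; have sum1 : \sum_(x in D) sin (theta x.1 - theta x.2) * phi x.1 = 0.
  by rewrite sum_darts_nbr big1 // => u _ /=; rewrite -mulr_suml fixed mul0r.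
have sum2 : \sum_(x in D) sin (theta x.1 - theta x.2) * phi x.2 =
    - \sum_(x in D) sin (theta x.1 - theta x.2) * phi x.1.
  rewrite (reindex_inj (can_inj swap_pairK)) /= -sumrN.
  apply: eq_big => [x | x _]; first by rewrite swap_darts.
  by rewrite -[theta x.2 - _]opprB sinN mulNr.
by under eq_bigr do rewrite mulrBr; rewrite sumrB sum2 opprK sum1 addr0.
Qed.

Variables th1 th2 : 'I_n -> R.
Hypothesis th1_cos : {in D, forall x, 0 <= cos (th1 x.1 - th1 x.2)}.
Hypothesis th2_cos : {in D, forall x, 0 <= cos (th2 x.1 - th2 x.2)}.

Lemma gradient_edge_angle_eq (phi : 'I_n -> R) :
  kuramoto_fixed_point e th1 -> kuramoto_fixed_point e th2 ->
  {in D, forall x, edge_angle th1 x - edge_angle th2 x = phi x.1 - phi x.2} ->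
  {in D, edge_angle th1 =1 edge_angle th2}.
Proof.
move=> fixed1 fixed2 grad.
have mono x : 0 <= (sin (edge_angle th1 x) - sin (edge_angle th2 x)) *
    (edge_angle th1 x - edge_angle th2 x) ?= iff (edge_angle th1 x == edge_angle th2 x).
  by apply: sin_leif_mono; rewrite ?centered_angle_ge ?centered_angle_le.
have sum0 : \sum_(x in D) (sin (edge_angle th1 x) - sin (edge_angle th2 x)) *
    (edge_angle th1 x - edge_angle th2 x) = 0.
  under eq_bigr => x xD do rewrite grad // !sin_centered_angle mulrBl.
  by rewrite sumrB !kuramoto_fixed_point_orth // subrr.
move=> x xD; apply/eqP; rewrite -(mono x).2; apply/eqP/esym.
by move/psumr_eq0P: sum0; apply => // y _; apply: (mono y).1.
Qed.

Lemma edge_angle_eq_same_fixed_point : (0 < n)%N -> connected_graph e ->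
  {in D, edge_angle th1 =1 edge_angle th2} -> same_fixed_point th1 th2.
Proof.
move=> n_gt0 e_conn eq_angle.
have edge_mod u v : e u v ->
    exists k : int, th2 u - th2 v = th1 u - th1 v + k%:~R * (2 * pi).
  move=> euv; have uvD : (u, v) \in D by rewrite in_darts.
  have := eq_angle _ uvD; rewrite /edge_angle /= => eq_c; apply: sin_cos_eq_mod2pi.
    by rewrite -(sin_centered_angle (th2 u - th2 v)) -eq_c sin_centered_angle.
  by rewrite -(cos_centered_angle (th2_cos uvD)) -eq_c (cos_centered_angle (th1_cos uvD)).
pose u0 := Ordinal n_gt0; pose c := th2 u0 - th1 u0.
pose P i := exists k : int, th2 i = th1 i + c + k%:~R * (2 * pi).
have vertex_mod i : P i.
  apply: (connect_ind (e_conn u0 i)).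
    by exists 0; rewrite /c; ring.
  move=> a b eab [k ak]; have [k' abk'] := edge_mod a b eab.
  by exists (k - k'); rewrite intrB; lra.
by have [k hk] := fin_all_exists vertex_mod; exists c, k.
Qed.

End FixedPoints.

Section StableFixedPoints.
Variables (R : realType) (n : nat) (e : rel 'I_n) (rot : 'I_n -> 'I_n -> 'I_n).
Variables (outer : {set 'I_n * 'I_n}) (K : R).
Hypotheses (n_gt0 : (0 < n)%N) (e_simple : simple_graph e) (e_conn : connected_graph e).
Hypothesis e_deg : forall u v, e u v -> (deg e u < 3)%N || (deg e v < 3)%N.
Hypotheses (rot_system : rotation_system e rot)
  (euler : #|edges e| = 0%N \/ (n + #|faces e rot| = #|edges e| + 2)%N).
Hypothesis outer_face : outer \in faces e rot \/ faces e rot = set0.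
Hypothesis K_gt0 : 0 < K.

Lemma stable_darts_cos_ge0 theta : stable_fixed_point e K theta ->
  {in darts e, forall x, 0 <= cos (theta x.1 - theta x.2)}.
Proof.
move=> stable x; rewrite in_darts => ex.
case/orP: (e_deg ex) => deg_x.
  exact: (stable_cos_ge0 K_gt0 e_simple stable ex deg_x).
have ex' : e x.2 x.1 by rewrite e_simple.1.
by rewrite -opprB cosN; exact: (stable_cos_ge0 K_gt0 e_simple stable ex' deg_x).
Qed.

Lemma same_winding_same_fixed_point th1 th2 :
  stable_fixed_point e K th1 -> stable_fixed_point e K th2 ->
  {in inner_faces e rot outer, winding th1 =1 winding th2} -> same_fixed_point th1 th2.
Proof.
move=> stable1 stable2 eq_w.
have cos1 := stable_darts_cos_ge0 stable1; have cos2 := stable_darts_cos_ge0 stable2.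
have [|F F_inner|phi grad] := face_sum0_gradient n_gt0 e_simple e_conn rot_system euler
    outer_face (dl := fun x => edge_angle th1 x - edge_angle th2 x).
- by move=> x _ /=; rewrite !edge_angle_swap opprB opprK addrC.
- have FF : F \in faces e rot by move: F_inner; rewrite inE => /andP [].
  by rewrite sumrB !(sum_face_edge_angle e_simple rot_system) // eq_w ?subrr.
- apply: (edge_angle_eq_same_fixed_point cos1 cos2 n_gt0 e_conn).
  exact: (gradient_edge_angle_eq e_simple stable1.1 stable2.1 grad).
Qed.

End StableFixedPoints.

Theorem corollary2 (R : realType) (n : nat) (e : rel 'I_n)
  (rot : 'I_n -> 'I_n -> 'I_n) (outer : {set 'I_n * 'I_n}) (K : R) :
  (0 < n)%N ->
  simple_graph e ->
  connected_graph e ->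
  every_edge_on_cycle e ->
  (forall u v, e u v -> (deg e u < 3)%N || (deg e v < 3)%N) ->
  planar_rotation e rot ->
  (outer \in faces e rot \/ faces e rot = set0) ->
  (0 < K)%R ->
  forall (N : nat) (theta : 'I_N -> 'I_n -> R),
    (forall a, stable_fixed_point e K (theta a)) ->
    (forall a b, same_fixed_point (theta a) (theta b) -> a = b) ->
    (N <= \prod_(F in faces e rot | F != outer) (2 * (face_size F %/ 4) + 1))%N.
Proof.
move=> n_gt0 e_simple e_conn _ e_deg [rot_system euler] outer_face K_gt0 N theta stable inj.
rewrite (eq_bigl (fun F => F \in inner_faces e rot outer)); last by move=> F; rewrite inE.
rewrite -[N]card_ord.
apply: (card_le_prod_box (w := fun a => winding (theta a))) => [a1 a2 eq_w | a F].
  apply/inj/(same_winding_same_fixed_point n_gt0 e_simple e_conn e_deg rot_system euler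
    outer_face K_gt0 (stable a1) (stable a2) eq_w).
rewrite inE => /andP [FF _]; rewrite leq_divRL // mulnC.
have theta_cos := stable_darts_cos_ge0 e_simple e_deg K_gt0 (stable a).
exact: (winding_bound e_simple rot_system theta_cos FF).
Qed.
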